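(* Let $\mathcal{A}$ be a central and essential arrangement in $\mathbb{Q}^l$ as in the context, with $\lcm$-period $\rho_0$. If a prime $p$ is not good for $\mathcal{A}$, then $p$ divides $\rho_0$.
   Context: $\mathcal{A}=\{H_1,\dots,H_n\}$: $n$ distinct linear hyperplanes in $\mathbb{Q}^l$ with $\bigcap H_i=\{0\}$, $H_i=\{\alpha_i=0\}$, $\alpha_i=\sum_{k=1}^lc_{ki}x_k$ with $c_{ki}\in\mathbb{Z}$ not all divisible by any prime. $p$ is good for $\mathcal{A}$ if the reduction mod $p$ of $\prod\alpha_i$ is reduced, equivalently no reduction $(\alpha_i)_p$ is a scalar multiple of $(\alpha_j)_p$ for $i<j$. Let $C=(c_{ki})\in\mathrm{Mat}_{l\times n}(\mathbb{Z})$ with columns $c_1,\dots,c_n$; for nonempty $J=\{i_1<\dots<i_k\}\subseteq[n]$, $C_J=(c_{i_1},\dots,c_{i_k})$. Its Smith normal form has nonzero diagonal entries $e_{J,1}\mid\dots\mid e_{J,r}$ (positive), $r=\mathrm{rk}(C_J)$; set $e(J)=e_{J,r}$. The $\lcm$-period is $\rho_0=\lcm\{e(J): J\subseteq[n],\ 1\le|J|\le l\}$. *)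

From HB Require Import structures.
From mathcomp Require Import all_boot all_order all_algebra.
Set Implicit Arguments. Unset Strict Implicit. Unset Printing Implicit Defensive.
Import Order.TTheory GRing.Theory Num.Theory.
Local Open Scope ring_scope.

(* The arrangement is given by the integer matrix C : 'M[int]_(l, n);
   column i holds the coefficients c_{1i},...,c_{li} of alpha_i. *)

Definition colsJ (l n : nat) (C : 'M[int]_(l, n)) (J : {set 'I_n}) :
  'M[int]_(l, #|J|) :=
  \matrix_(k, i) C k (enum_val i).

Definition smith_nonzero_diag (a b : nat) (M : 'M[int]_(a, b)) (d : seq int) : Prop :=
  exists2 L : 'M[int]_a, L \in unitmx &
  exists2 R : 'M[int]_b, R \in unitmx &
    [/\ all (fun x => 0 < x) d, sorted dvdz d, (size d <= minn a b)%N &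
        M = L *m (\matrix_(i, j) (d`_i *+ (i == j :> nat))) *m R].

Definition is_last_invariant_factor (a b : nat) (M : 'M[int]_(a, b)) (e : nat) : Prop :=
  exists d : seq int, smith_nonzero_diag M d /\ d != [::] /\ (e%:Z = last 1 d).

Definition red_col (p l n : nat) (C : 'M[int]_(l, n)) (i : 'I_n) : 'cV['F_p]_l :=
  map_mx (fun z : int => z%:~R) (col i C).

Definition good_prime (p l n : nat) (C : 'M[int]_(l, n)) : Prop :=
  forall i j : 'I_n, (i < j)%N ->
    ~ exists lam : 'F_p, red_col p C i = lam *: red_col p C j.

Definition primitive_columns (l n : nat) (C : 'M[int]_(l, n)) : Prop :=
  forall (i : 'I_n) (q : nat), prime q -> exists k : 'I_l, ~~ ((q%:Z %| C k i)%Z).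

Definition distinct_hyperplanes (l n : nat) (C : 'M[int]_(l, n)) : Prop :=
  forall i j : 'I_n, i != j ->
    ~ exists lam : rat, map_mx intr (col i C) = lam *: map_mx intr (col j C).

Definition essential (l n : nat) (C : 'M[int]_(l, n)) : Prop :=
  forall x : 'rV[rat]_l, x *m map_mx intr C = 0 -> x = 0.

Definition lcm_period (l n : nat) (e : {set 'I_n} -> nat) : nat :=
  \big[lcmn/1%N]_(J : {set 'I_n} | (0 < #|J| <= l)%N) e J.

(* If p is not good, two columns c_i, c_j of C become proportional mod p,
   whereas they are linearly independent over Q because H_i <> H_j.  Hence for
   J = {i, j} the l x 2 matrix C_J is injective over Q but not over F_p.
   Writing C_J = L diag(e_1, ..., e_r) R with L, R unimodular, injectivity
   over Q forces r = 2 (and l >= 2), while a kernel vector over F_p forces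
   p | e_k for some k <= 2, hence p | e_2 = e(J), which divides rho_0. *)

From HB Require Import structures.
From mathcomp Require Import all_boot all_order all_algebra.
Import Order.TTheory GRing.Theory Num.Theory.
Set Implicit Arguments.
Unset Strict Implicit.
Unset Printing Implicit Defensive.
Local Open Scope ring_scope.

Definition kernel_nontrivial (R : nzRingType) (a b : nat) (M : 'M[R]_(a, b)) : Prop :=
  exists2 v : 'cV[R]_b, v != 0 & M *m v = 0.

Lemma kernel_trivial_leq (F : fieldType) (a b : nat) (M : 'M[F]_(a, b)) :
  ~ kernel_nontrivial M -> (b <= a)%N.
Proof.
move=> free; rewrite leqNgt; apply/negP => lt_ab.
have K_neq0 : kermx M^T != 0.
  rewrite -mxrank_eq0 mxrank_ker -lt0n subn_gt0.
  exact: leq_ltn_trans (rank_leq_col _) lt_ab.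
have [i rowK_neq0] : exists i, row i (kermx M^T) != 0.
  apply/existsP; apply: contraR K_neq0 => /existsPn rowK0.
  by apply/eqP/row_matrixP => i; rewrite row0; apply/eqP/negbNE.
apply: free; exists (row i (kermx M^T))^T; first by rewrite trmx_eq0.
by rewrite -[M]trmxK -trmx_mul trmxK -row_mul mulmx_ker row0 trmx0.
Qed.

Lemma unitmx_map_int (R : comUnitRingType) (m : nat) (A : 'M[int]_m) :
  A \in unitmx -> (map_mx intr A : 'M[R]_m) \in unitmx.
Proof. by rewrite !unitmxE det_map_mx; apply: rmorph_unit. Qed.

Lemma kernel_nontrivial_unit_mul (R : comUnitRingType) (a b : nat)
    (L : 'M[R]_a) (N : 'M[R]_(a, b)) (U : 'M[R]_b) :
  L \in unitmx -> U \in unitmx ->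
  kernel_nontrivial (L *m N *m U) <-> kernel_nontrivial N.
Proof.
move=> uL uU; split=> [[v v_neq0 LNUv0] | [w w_neq0 Nw0]].
- exists (U *m v).
    apply: contraNneq v_neq0 => /(congr1 (mulmx (invmx U))).
    by rewrite mulKmx // mulmx0 => ->.
  move: LNUv0; rewrite -!mulmxA => /(congr1 (mulmx (invmx L))).
  by rewrite mulKmx // mulmx0 => ->.
- exists (invmx U *m w).
    apply: contraNneq w_neq0 => /(congr1 (mulmx U)).
    by rewrite mulKVmx // mulmx0 => ->.
  by rewrite -!mulmxA mulKVmx // Nw0 mulmx0.
Qed.

Definition smith_diag (R : nzRingType) (a b : nat) (d : seq R) : 'M[R]_(a, b) :=
  \matrix_(i, j) (d`_i *+ (i == j :> nat)).

Lemma kernel_smith_diag (R : idomainType) (a b : nat) (d : seq int) :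
  (size d <= a)%N ->
  kernel_nontrivial (map_mx intr (smith_diag a b d) : 'M[R]_(a, b)) <->
  exists k : 'I_b, (d`_k)%:~R == 0 :> R.
Proof.
(* [d`_k] is [0] for [k >= size d], which accounts for the zero columns. *)
have Dw_entry (w : 'cV[R]_b) (i : 'I_a) (k : 'I_b) : i = k :> nat ->
    (map_mx intr (smith_diag a b d) *m w) i 0 = (d`_k)%:~R * w k 0.
  move=> ik; rewrite !mxE (bigD1 k) //= big1 => [|j jk]; rewrite !mxE ik ?eqxx.
    by rewrite mulr1n addr0.
  by rewrite eq_sym (inj_eq val_inj) (negbTE jk) mulr0n mul0r.
move=> size_d; split=> [[w w_neq0 Dw0] | [k dk0]].
- have [k wk_neq0] : exists k, w k 0 != 0.
    apply/existsP; apply: contraR w_neq0 => /existsPn w0.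
    by apply/eqP/matrixP => k j; rewrite ord1 mxE; apply/eqP/negbNE.
  exists k; have [ka | ak] := ltnP k a.
    move: (Dw_entry w (Ordinal ka) k erefl); rewrite Dw0 mxE.
    by move/esym/eqP; rewrite mulf_eq0 (negbTE wk_neq0) orbF.
  by rewrite nth_default ?(leq_trans size_d).
- exists (delta_mx k 0).
    by apply/eqP => /matrixP/(_ k 0); rewrite !mxE !eqxx => /eqP; rewrite oner_eq0.
  apply/matrixP => i j; rewrite ord1 [RHS]mxE.
  have [ltib | leb] := ltnP i b.
    rewrite (Dw_entry _ i (Ordinal ltib)) // mxE.
    by case: eqP => [-> | _]; rewrite ?(eqP dk0) ?mul0r ?mulr0.
  rewrite !mxE big1 // => j' _; rewrite !mxE.
  have /negbTE -> : i != j' :> nat by rewrite neq_ltn (leq_trans (ltn_ord j') leb) orbT.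
  by rewrite mulr0n mul0r.
Qed.

Lemma smith_kernel (R : idomainType) (a b : nat) (M : 'M[int]_(a, b)) (d : seq int) :
  smith_nonzero_diag M d ->
  kernel_nontrivial (map_mx intr M : 'M[R]_(a, b)) <->
  exists k : 'I_b, (d`_k)%:~R == 0 :> R.
Proof.
move=> [L uL [U uU [_ _ size_d ->]]]; rewrite !map_mxM.
apply: iff_trans (kernel_nontrivial_unit_mul _ _ _) _; rewrite ?unitmx_map_int //.
exact: (kernel_smith_diag R b (leq_trans size_d (geq_minl a b))).
Qed.

Lemma smith_size_geq (a b : nat) (M : 'M[int]_(a, b)) (d : seq int) :
  smith_nonzero_diag M d -> ~ kernel_nontrivial (map_mx intr M : 'M[rat]_(a, b)) ->
  (b <= size d)%N.
Proof.
move=> sm free; rewrite leqNgt; apply/negP => lt_db.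
by apply/free/(smith_kernel _ sm); exists (Ordinal lt_db); rewrite nth_default.
Qed.

Lemma smith_last_dvdz (p a b : nat) (M : 'M[int]_(a, b)) (d : seq int) :
  prime p -> smith_nonzero_diag M d ->
  ~ kernel_nontrivial (map_mx intr M : 'M[rat]_(a, b)) ->
  kernel_nontrivial (map_mx intr M : 'M['F_p]_(a, b)) ->
  (p%:Z %| last 1 d)%Z.
Proof.
move=> p_pr sm free /(smith_kernel _ sm) [k].
rewrite -(dvdz_pcharf (pchar_Fp p_pr)) => p_dk.
have k_lt : (k < size d)%N := leq_trans (ltn_ord k) (smith_size_geq sm free).
have [_ _ [_ _ [_ d_sorted _ _]]] := sm.
have d_gt0 : (0 < size d)%N := leq_ltn_trans (leq0n k) k_lt.
apply: dvdz_trans p_dk _; rewrite -nth_last (set_nth_default 0) ?prednK //.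
by apply: (sorted_leq_nth dvdz_trans dvdzz); rewrite ?inE /= ?prednK // -ltnS prednK.
Qed.

Section ColumnSelection.

Variables (R : nzRingType) (n : nat) (J : {set 'I_n}).

Definition col_select : 'M[R]_(n, #|J|) := \matrix_(x, y) (x == enum_val y)%:R.

Lemma col_select_enum_val (v : 'cV[R]_#|J|) (y : 'I_#|J|) :
  (col_select *m v) (enum_val y) 0 = v y 0.
Proof.
rewrite mxE (bigD1 y) //= big1 => [|z zy]; rewrite mxE ?eqxx ?mul1r ?addr0 //.
by rewrite (inj_eq enum_val_inj) eq_sym (negbTE zy) mul0r.
Qed.

Lemma col_select_notin (v : 'cV[R]_#|J|) (x : 'I_n) :
  x \notin J -> (col_select *m v) x 0 = 0.
Proof.
move=> xJ; rewrite mxE big1 // => y _; rewrite mxE.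
have /negbTE -> : x != enum_val y by apply: contraNneq xJ => ->; apply: enum_valP.
by rewrite mul0r.
Qed.

Lemma col_select_restrict (w : 'cV[R]_n) :
  (forall x, x \notin J -> w x 0 = 0) -> col_select *m \col_y w (enum_val y) 0 = w.
Proof.
move=> w_supp; apply/matrixP => x z; rewrite ord1.
have [xJ | xJ] := boolP (x \in J); last by rewrite col_select_notin ?w_supp.
by rewrite -(enum_rankK_in xJ xJ) col_select_enum_val mxE.
Qed.

End ColumnSelection.

Lemma map_colsJ (R : nzRingType) (l n : nat) (C : 'M[int]_(l, n)) (J : {set 'I_n}) :
  map_mx intr (colsJ C J) = map_mx intr C *m col_select R J :> 'M[R]_(l, #|J|).
Proof.
apply/matrixP => k y; rewrite !mxE (bigD1 (enum_val y)) //= big1 => [|x xy].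
  by rewrite !mxE eqxx mulr1 addr0.
by rewrite !mxE (negbTE xy) mulr0.
Qed.

Lemma colsJ_kernel (R : nzRingType) (l n : nat) (C : 'M[int]_(l, n)) (J : {set 'I_n}) :
  kernel_nontrivial (map_mx intr (colsJ C J) : 'M[R]_(l, #|J|)) <->
  exists2 w : 'cV[R]_n, w != 0 &
    (forall x, x \notin J -> w x 0 = 0) /\ map_mx intr C *m w = 0.
Proof.
rewrite map_colsJ; split=> [[v v_neq0 CSv0] | [w w_neq0 [w_supp Cw0]]].
- exists (col_select R J *m v); last by split; [exact: col_select_notin | rewrite mulmxA].
  apply: contraNneq v_neq0 => Sv0; apply/eqP/matrixP => y z.
  by rewrite ord1 -col_select_enum_val Sv0 !mxE.
- exists (\col_y w (enum_val y) 0); last by rewrite -mulmxA col_select_restrict.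
  by apply: contraNneq w_neq0 => v0; rewrite -(col_select_restrict w_supp) v0 mulmx0.
Qed.

Lemma mulmx_supported_pair (R : comNzRingType) (l n : nat) (C : 'M[R]_(l, n))
    (i j : 'I_n) (w : 'cV[R]_n) :
  i != j -> (forall x, x \notin [set i; j] -> w x 0 = 0) ->
  C *m w = w i 0 *: col i C + w j 0 *: col j C.
Proof.
move=> ij w_supp; apply/matrixP => k z; rewrite ord1 !mxE (bigD1 i) //= (bigD1 j) 1?eq_sym //=.
rewrite big1 => [|x /andP [xj xi]]; last by rewrite w_supp ?mulr0 // !inE negb_or xi xj.
by rewrite addr0 [C k i * _]mulrC [C k j * _]mulrC.
Qed.

Lemma distinct_cols_free (l n : nat) (C : 'M[int]_(l, n)) (i j : 'I_n) (a b : rat) :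
  distinct_hyperplanes C -> i != j ->
  a *: map_mx intr (col i C) + b *: map_mx intr (col j C) = 0 -> a = 0 /\ b = 0.
Proof.
move=> dist ij comb0.
have [a0 | a_neq0] := eqVneq a 0.
  split=> //; have [// | b_neq0] := eqVneq b 0.
  case: (dist j i); first by rewrite eq_sym.
  exists 0; rewrite scale0r; apply: (scalerI b_neq0).
  by move: comb0; rewrite a0 scale0r add0r scaler0.
case: (dist i j ij); exists (- (b / a)).
apply: (scalerI a_neq0); rewrite scalerA mulrN mulrCA divff // mulr1 scaleNr.
by apply/eqP; rewrite -addr_eq0 comb0.
Qed.

Lemma colsJ_pair_free (l n : nat) (C : 'M[int]_(l, n)) (i j : 'I_n) :
  distinct_hyperplanes C -> i != j ->
  ~ kernel_nontrivial (map_mx intr (colsJ C [set i; j]) : 'M[rat]_(l, _)).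
Proof.
move=> dist ij /colsJ_kernel [w w_neq0 [w_supp]].
rewrite (mulmx_supported_pair _ ij w_supp) -!map_col.
move=> /(distinct_cols_free dist ij) [wi0 wj0].
apply: (negP w_neq0); apply/eqP/matrixP => x z; rewrite ord1 mxE.
have [xij | /w_supp //] := boolP (x \in [set i; j]).
by move: xij; rewrite !inE => /orP [] /eqP ->.
Qed.

Lemma colsJ_pair_dependent (R : comNzRingType) (l n : nat) (C : 'M[int]_(l, n))
    (i j : 'I_n) (lam : R) :
  i != j -> map_mx intr (col i C) = lam *: map_mx intr (col j C) ->
  kernel_nontrivial (map_mx intr (colsJ C [set i; j]) : 'M[R]_(l, _)).
Proof.
move=> ij ci_lam; apply/colsJ_kernel.
pose w : 'cV[R]_n := \col_x ((x == i)%:R - lam * (x == j)%:R).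
have w_supp x : x \notin [set i; j] -> w x 0 = 0.
  by rewrite !inE negb_or mxE => /andP [/negbTE -> /negbTE ->]; rewrite mulr0 subr0.
exists w; last split=> //.
  apply/eqP => /matrixP/(_ i 0); rewrite !mxE eqxx (negbTE ij) mulr0 subr0.
  by move/eqP; rewrite oner_eq0.
have ji : j != i by rewrite eq_sym.
rewrite (mulmx_supported_pair _ ij w_supp) !mxE !eqxx (negbTE ij) (negbTE ji).
rewrite mulr0 subr0 mulr1 sub0r.
by rewrite scale1r -map_col ci_lam scaleNr map_col subrr.
Qed.

Theorem proposition7p4 (l n : nat) (C : 'M[int]_(l, n))
  (e : {set 'I_n} -> nat) (p : nat) :
  primitive_columns C -> distinct_hyperplanes C -> essential C ->
  (forall J : {set 'I_n}, (0 < #|J| <= l)%N ->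
     is_last_invariant_factor (colsJ C J) (e J)) ->
  prime p -> ~ good_prime p C ->
  (p %| lcm_period l e)%N.
Proof.
move=> _ dist _ last_factor p_pr not_good.
apply/negPn/negP => p_ndvd; apply: not_good => i j lt_ij [lam red_dep]; apply: (negP p_ndvd).
have ij : i != j by rewrite neq_ltn lt_ij.
have free := colsJ_pair_free dist ij.
have J_size : (0 < #|[set i; j]| <= l)%N.
  by rewrite (kernel_trivial_leq free) andbT cards2 ij.
apply: (biglcmn_sup [set i; j]) => //.
have [d [smith_d [_ e_last]]] := last_factor _ J_size.
rewrite -[(p %| _)%N]/(p%:Z %| (e [set i; j])%:Z)%Z e_last.
exact: smith_last_dvdz p_pr smith_d free (colsJ_pair_dependent ij red_dep).
Qed.
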